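(* Let $n=p_1^{m_1}\cdots p_k^{m_k}$ be neither prime nor the square of a prime, and let $T=\prod_{i=1}^k(m_i+1)-2$ be the number of vertices of $\mathcal E_{\mathbb Z_n}$. Then $b(\mathcal E_{\mathbb Z_n})\le T$, with equality if and only if one of the following holds: (i) $k=1$ and $m_1>2$; (ii) $k=2$ and $m_1=m_2=1$; (iii) $k\ge2$ and $m_i>1$ for at least one $i$.
   Context: Primes $p_1<\dots<p_k$, positive integers $m_i$. The essential ideal graph $\mathcal E_{\mathbb Z_n}$ has vertices the nonzero proper ideals of $\mathbb Z_n$, with distinct $I,K$ adjacent iff $I+K$ is essential (meets every nonzero ideal nontrivially). For a graph $\Gamma$, $b(\Gamma)$ denotes the largest eigenvalue of its Laplacian matrix $D-A$. *)

From HB Require Import structures.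
From mathcomp Require Import all_boot all_order all_algebra.
From mathcomp Require Import polyrcf.
Set Implicit Arguments. Unset Strict Implicit. Unset Printing Implicit Defensive.
Import Order.TTheory GRing.Theory Num.Theory.
Local Open Scope ring_scope.

Definition is_ideal (n : nat) (I : {set 'Z_n}) : bool :=
  [&& 0 \in I,
      [forall x, forall y, (x \in I) && (y \in I) ==> (x - y \in I)] &
      [forall r, forall x, (x \in I) ==> (r * x \in I)]].

Definition zero_ideal (n : nat) : {set 'Z_n} := [set 0].

Definition ideal_sum (n : nat) (I K : {set 'Z_n}) : {set 'Z_n} :=
  [set x + y | x in I, y in K].

Definition essential (n : nat) (I : {set 'Z_n}) : bool :=
  [forall K : {set 'Z_n}, is_ideal K && (K != zero_ideal n) ==>
                           (I :&: K != zero_ideal n)].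

Definition EIG_vertices (n : nat) : {set {set 'Z_n}} :=
  [set I : {set 'Z_n} | [&& is_ideal I, I != zero_ideal n & I != setT]].

Definition EIG_adj (n : nat) (I K : {set 'Z_n}) : bool :=
  (I != K) && essential (ideal_sum I K).

Definition EIG_nv (n : nat) : nat := #|EIG_vertices n|.

Definition EIG_vertex (n : nat) (i : 'I_(EIG_nv n)) : {set 'Z_n} :=
  enum_val i.

Definition EIG_deg (n : nat) (I : {set 'Z_n}) : nat :=
  #|[set K in EIG_vertices n | EIG_adj I K]|.

Definition EIG_laplacian (R : nzRingType) (n : nat) : 'M[R]_(EIG_nv n) :=
  \matrix_(i, j) (if i == j then (EIG_deg (EIG_vertex i))%:R
                  else - (EIG_adj (EIG_vertex i) (EIG_vertex j))%:R).

(* Largest eigenvalue (the Laplacian is real symmetric, so its eigenvalues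
   are the real roots of its characteristic polynomial; they are all >= 0,
   so the default value 0 of the max is harmless). *)
Definition largest_eigenvalue (R : rcfType) (m : nat) (A : 'M[R]_m) : R :=
  \big[Num.max/0]_(a <- rootsR (char_poly A)) a.

Definition b_EIG (R : rcfType) (n : nat) : R :=
  largest_eigenvalue (EIG_laplacian R n).

(* The Laplacians of a graph on N vertices and of its complement add up to
   N I - J.  For an eigenvector x of the Laplacian with eigenvalue l <> 0, x is
   orthogonal to the all-ones vector, so the quadratic form of the complement's
   Laplacian at x equals (N - l) |x|^2 >= 0: every eigenvalue is at most N, and
   N is one only if x is constant along the edges of the complement (so x = 0
   when the complement has diameter at most 2).  A vertex adjacent to all
   others, on the other hand, makes N an eigenvalue.
   The nonzero proper ideals of Z_n are the dZ_n with d | n, 1 < d < n, so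
   there are prod (m_i + 1) - 2 of them, and dZ_n + eZ_n = gcd(d, e)Z_n.  If
   p^2 | n then pZ_n is essential, hence adjacent to every other vertex; if
   n = pq then pZ_n + qZ_n = Z_n.  If n is squarefree, dZ_n misses (n/d)Z_n, so
   dZ_n and eZ_n are non-adjacent as soon as gcd(d, e) > 1, and for coprime d, e
   with p | d, q | e and a third prime factor of n, pqZ_n is a common
   non-neighbour: the complement has diameter at most 2. *)

From HB Require Import structures.
From mathcomp Require Import all_boot all_order all_algebra.
From mathcomp Require Import polyrcf.
From mathcomp Require Import zify ring.
Set Implicit Arguments. Unset Strict Implicit. Unset Printing Implicit Defensive.
Import Order.TTheory GRing.Theory Num.Theory.
Local Open Scope ring_scope.

Section LargestEigenvalue.
Variables (R : rcfType) (N : nat) (A : 'M[R]_N).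

Lemma mem_rootsR_char l : (l \in rootsR (char_poly A)) = eigenvalue A l.
Proof.
rewrite eigenvalue_root_char -(roots_on_rootsR (monic_neq0 (char_poly_monic A))).
by rewrite in_itv.
Qed.

Lemma largest_eigenvalue_le B : 0 <= B -> (forall l, eigenvalue A l -> l <= B) ->
  largest_eigenvalue A <= B.
Proof.
move=> B_ge0 leB; rewrite /largest_eigenvalue big_seq.
by apply: bigmax_le => // l; rewrite mem_rootsR_char; apply: leB.
Qed.

Lemma largest_eigenvalue_ge l : eigenvalue A l -> l <= largest_eigenvalue A.
Proof. by rewrite -mem_rootsR_char => Al; apply: le_bigmax_seq. Qed.

Lemma largest_eigenvalue_eigen :
  largest_eigenvalue A != 0 -> eigenvalue A (largest_eigenvalue A).
Proof.
rewrite -mem_rootsR_char; set s := rootsR _.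
suff : (largest_eigenvalue A == 0) || (largest_eigenvalue A \in s) by case: eqP.
rewrite /largest_eigenvalue big_seq.
apply: (big_ind (fun y => (y == 0) || (y \in s))) => [|x y|l ->]; rewrite ?eqxx ?orbT //.
by case: (leP x y).
Qed.

End LargestEigenvalue.

Lemma sum_indicator_eq (R : nzRingType) (N : nat) (F : 'I_N -> R) i :
  \sum_j (i == j)%:R * F j = F i.
Proof.
rewrite (bigD1 i) //= eqxx mul1r big1 ?addr0 // => j /negbTE.
by rewrite eq_sym => ->; rewrite mul0r.
Qed.

Section Laplacian.
Variables (R : rcfType) (N : nat).

Section Graph.
Variable adj : rel 'I_N.

Definition degree i := #|[set j | adj i j]|.

Definition laplacian : 'M[R]_N :=
  \matrix_(i, j) (if i == j then (degree i)%:R else - (adj i j)%:R).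

Lemma degreeE i : (degree i)%:R = \sum_j (adj i j)%:R :> R.
Proof.
rewrite /degree -sum1_card natr_sum big_mkcond /=; apply: eq_bigr => j _.
by rewrite inE; case: (adj i j).
Qed.

Hypothesis adj_irr : irreflexive adj.

Lemma laplacianE i j : laplacian i j = (i == j)%:R * (degree i)%:R - (adj i j)%:R.
Proof.
rewrite mxE; have [<-|_] := eqVneq i j; first by rewrite adj_irr mul1r subr0.
by rewrite mul0r sub0r.
Qed.

Lemma laplacian_row_sum i : \sum_j laplacian i j = 0.
Proof.
under eq_bigr do rewrite laplacianE.
by rewrite sumrB sum_indicator_eq degreeE subrr.
Qed.

Hypothesis adj_sym : symmetric adj.

Lemma laplacian_col_sum j : \sum_i laplacian i j = 0.
Proof.
rewrite -[RHS](laplacian_row_sum j); apply: eq_bigr => i _.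
by rewrite !mxE eq_sym adj_sym; case: eqP => [->|].
Qed.

Lemma laplacian_qform (x : 'I_N -> R) :
  \sum_i \sum_j (adj i j)%:R * (x j - x i) ^+ 2 =
  2 * \sum_j (\sum_i x i * laplacian i j) * x j.
Proof.
have row i : \sum_j x i * laplacian i j * x j =
    (degree i)%:R * x i ^+ 2 - \sum_j (adj i j)%:R * (x i * x j).
  under eq_bigr do rewrite laplacianE mulrBr mulrBl mulrCA -mulrA.
  rewrite sumrB sum_indicator_eq; congr (_ - _); first ring.
  by apply: eq_bigr => j _; ring.
have -> : \sum_j (\sum_i x i * laplacian i j) * x j =
    \sum_i \sum_j x i * laplacian i j * x j.
  by under eq_bigr do rewrite mulr_suml; exact: exchange_big.
under [in RHS]eq_bigr do rewrite row.
rewrite sumrB mulrBr.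
have sq i j : (adj i j)%:R * (x j - x i) ^+ 2 =
    (adj i j)%:R * x j ^+ 2 + (adj i j)%:R * x i ^+ 2 - 2 * ((adj i j)%:R * (x i * x j)).
  by ring.
under eq_bigr do under eq_bigr do rewrite sq.
under eq_bigr do rewrite sumrB big_split /= -mulr_sumr -mulr_suml -degreeE.
rewrite sumrB big_split /= -mulr_sumr exchange_big /=.
have -> : \sum_j \sum_i (adj i j)%:R * x j ^+ 2 = \sum_j (degree j)%:R * x j ^+ 2.
  by apply: eq_bigr => j _; rewrite degreeE mulr_suml; apply: eq_bigr => i _; rewrite adj_sym.
by ring.
Qed.

End Graph.

Variable adj : rel 'I_N.
Hypothesis adj_sym : symmetric adj.
Hypothesis adj_irr : irreflexive adj.

Definition compl_rel : rel 'I_N := fun i j => (i != j) && ~~ adj i j.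

Lemma compl_rel_sym : symmetric compl_rel.
Proof. by move=> i j; rewrite /compl_rel eq_sym adj_sym. Qed.

Lemma compl_rel_irr : irreflexive compl_rel.
Proof. by move=> i; rewrite /compl_rel eqxx. Qed.

Lemma laplacianD_compl i j :
  laplacian adj i j + laplacian compl_rel i j = (i == j)%:R * N%:R - 1 :> R.
Proof.
have indicator k : (adj i k)%:R + (compl_rel i k)%:R = 1 - (i == k)%:R :> R.
  rewrite /compl_rel; have [<-|_] := eqVneq i k; first by rewrite adj_irr /= mulr1n subrr addr0.
  by case: (adj i k); rewrite /= ?addr0 ?add0r ?subr0.
have degD : (degree adj i)%:R + (degree compl_rel i)%:R = N%:R - 1 :> R.
  rewrite !degreeE -big_split /=; under eq_bigr do rewrite indicator.
  rewrite sumrB sumr_const card_ord; congr (_ - _).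
  by rewrite -[RHS](sum_indicator_eq (fun=> 1) i); apply: eq_bigr => k _; rewrite mulr1.
rewrite (laplacianE adj_irr) (laplacianE compl_rel_irr) addrACA -mulrDr degD -opprD indicator.
ring.
Qed.

Lemma laplacian_eigenvector_compl_qform (v : 'rV[R]_N) l : v *m laplacian adj = l *: v ->
  l * \sum_i v 0 i = 0 /\
  \sum_i \sum_j (compl_rel i j)%:R * (v 0 j - v 0 i) ^+ 2 =
    2 * ((N%:R - l) * \sum_i v 0 i ^+ 2 - (\sum_i v 0 i) ^+ 2).
Proof.
move=> /matrixP eig.
have eigj j : \sum_i v 0 i * laplacian adj i j = l * v 0 j by move: (eig 0 j); rewrite !mxE.
split.
  rewrite mulr_sumr; under eq_bigr do rewrite -eigj.
  rewrite exchange_big /=; apply: big1 => i _.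
  by rewrite -mulr_sumr (laplacian_row_sum adj_irr) mulr0.
have eigc j : \sum_i v 0 i * laplacian compl_rel i j =
    N%:R * v 0 j - \sum_i v 0 i - l * v 0 j.
  have -> : \sum_i v 0 i * laplacian compl_rel i j =
      \sum_i v 0 i * ((i == j)%:R * N%:R - 1) - \sum_i v 0 i * laplacian adj i j.
    by rewrite -sumrB; apply: eq_bigr => i _; rewrite -laplacianD_compl; ring.
  rewrite eigj; congr (_ - _); under eq_bigr => i _ do rewrite mulrBr mulr1 (eq_sym i) mulrCA.
  by rewrite sumrB sum_indicator_eq mulrC.
rewrite (laplacian_qform compl_rel_irr compl_rel_sym); congr (2 * _).
under eq_bigr do rewrite eigc.
rewrite (eq_bigr (fun j => (N%:R - l) * v 0 j ^+ 2 - (\sum_i v 0 i) * v 0 j)); last first.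
  by move=> j _; ring.
by rewrite sumrB -!mulr_sumr; ring.
Qed.

Lemma sum_sqr_gt0 (v : 'rV[R]_N) : v != 0 -> 0 < \sum_i v 0 i ^+ 2.
Proof.
move=> v_neq0; rewrite lt_def sumr_ge0 ?andbT => [|i _]; last exact: sqr_ge0.
rewrite psumr_neq0 => [|i _]; last exact: sqr_ge0.
apply: contraNT v_neq0 => /hasPn v0; apply/eqP/matrixP => r c; rewrite ord1 mxE.
by apply/eqP; move: (v0 c (mem_index_enum c)); rewrite lt_def sqr_ge0 andbT /= sqrf_eq0 negbK.
Qed.

Lemma laplacian_eigenvalue_le l : eigenvalue (laplacian adj) l -> l <= N%:R.
Proof.
case/eigenvalueP => v /laplacian_eigenvector_compl_qform [lS0 compl_qform] v_neq0.
have [->|l_neq0] := eqVneq l 0; first exact: ler0n.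
have S0 : \sum_i v 0 i = 0.
  by move/eqP: lS0; rewrite mulf_eq0 (negbTE l_neq0) => /eqP.
have : 0 <= \sum_i \sum_j (compl_rel i j)%:R * (v 0 j - v 0 i) ^+ 2.
  by do 2![apply: sumr_ge0 => ? _]; rewrite mulr_ge0 ?ler0n ?sqr_ge0.
rewrite compl_qform S0 expr0n subr0 pmulr_rge0 // pmulr_lge0 ?sum_sqr_gt0 //.
by rewrite subr_ge0.
Qed.

Lemma laplacian_eigenvector_N (v : 'rV[R]_N) : (0 < N)%N ->
  v *m laplacian adj = N%:R *: v ->
  \sum_i v 0 i = 0 /\ forall i j, compl_rel i j -> v 0 i = v 0 j.
Proof.
move=> N_gt0 /laplacian_eigenvector_compl_qform [NS0 compl_qform].
have S0 : \sum_i v 0 i = 0.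
  by move/eqP: NS0; rewrite mulf_eq0 pnatr_eq0 eqn0Ngt N_gt0 => /eqP.
split=> // i j cij; move/eqP: compl_qform.
rewrite subrr mul0r S0 expr0n /= subr0 mulr0 psumr_eq0 => [|k _]; last first.
  by apply: sumr_ge0 => ? _; rewrite mulr_ge0 ?ler0n ?sqr_ge0.
move=> /allP /(_ i (mem_index_enum i)); rewrite /= psumr_eq0 => [|k _]; last first.
  by rewrite mulr_ge0 ?ler0n ?sqr_ge0.
move=> /allP /(_ j (mem_index_enum j)); rewrite /= cij mul1r sqrf_eq0 subr_eq0.
by move=> /eqP.
Qed.

Lemma laplacian_eigenvalue_universal u : (1 < N)%N ->
  (forall j, j != u -> adj u j) -> eigenvalue (laplacian adj) N%:R.
Proof.
move=> N_gt1 u_univ; apply/eigenvalueP.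
have c0 k : compl_rel u k = false.
  by rewrite /compl_rel eq_sym; case: eqP => //= /eqP /u_univ ->.
have Lu j : laplacian adj u j = (u == j)%:R * N%:R - 1.
  rewrite -laplacianD_compl (laplacianE compl_rel_irr) degreeE c0.
  by rewrite big1 => [|k _]; rewrite ?c0 // mulr0 subr0 addr0.
exists (\row_j ((u == j)%:R * N%:R - 1)).
  apply/matrixP => r j; rewrite ord1 !mxE.
  under eq_bigr => i _ do rewrite mxE mulrBl mulrAC.
  rewrite sumrB -mulr_suml sum_indicator_eq; under eq_bigr do rewrite mul1r.
  by rewrite (laplacian_col_sum adj_irr adj_sym) subr0 Lu mulrC.
apply/eqP => /matrixP /(_ 0 u); rewrite !mxE eqxx mul1r => /eqP.
by rewrite subr_eq0 pnatr_eq1 gtn_eqF.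
Qed.

Lemma laplacian_not_eigenvalue_N : (0 < N)%N ->
  (forall i j, i != j -> compl_rel i j \/ exists2 k, compl_rel i k & compl_rel k j) ->
  ~~ eigenvalue (laplacian adj) N%:R.
Proof.
move=> N_gt0 diam2; apply/eigenvalueP => -[v /(laplacian_eigenvector_N N_gt0) [S0 vc]].
have v_const i j : v 0 i = v 0 j.
  by have [<-//|/diam2 [/vc //|[k /vc -> /vc]]] := eqVneq i j.
set i0 : 'I_N := Ordinal N_gt0.
move: S0; under eq_bigr do rewrite (v_const _ i0).
move/eqP; rewrite sumr_const card_ord -mulr_natl mulf_eq0 pnatr_eq0 eqn0Ngt N_gt0.
move=> /eqP vi0; apply/negP; rewrite negbK; apply/eqP/matrixP => r c.
by rewrite ord1 mxE (v_const _ i0) vi0.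
Qed.

End Laplacian.

Section DivisorArithmetic.
Local Open Scope nat_scope.

(* [divisors] folds [add_divisors] over the prime decomposition; a factor
   (p, e) multiplies the length of the list by e + 1. *)
Lemma size_add_divisors f divs :
  size (PrimeDecompAux.add_divisors f divs) = f.2.+1 * size divs.
Proof.
case: f => p e; rewrite /PrimeDecompAux.add_divisors /=.
by elim: e => [|e IH] /=; rewrite ?mul1n // size_merge size_cat size_map IH mulSn addnC.
Qed.

Lemma size_divisors n : size (divisors n) = \prod_(p <- primes n) (logn p n).+1.
Proof.
rewrite /divisors prime_decompE; elim: (primes n) => [|p s IH]; first by rewrite big_nil.
by rewrite big_cons -IH (size_add_divisors (p, logn p n)).
Qed.

Lemma size_divisors_ge2 n : 1 < n -> 2 <= size (divisors n).
Proof.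
move=> n_gt1; apply: (@uniq_leq_size _ [:: 1; n]); first by rewrite /= inE andbT eq_sym gtn_eqF.
by move=> d; rewrite !inE => /orP[] /eqP ->; [exact: divisor1 | exact: divisors_id (ltnW n_gt1)].
Qed.

Lemma prod_primes_logn n : 0 < n -> n = \prod_(p <- primes n) p ^ logn p n.
Proof. by move=> n_gt0; rewrite {1}(prod_prime_decomp n_gt0) prime_decompE big_map. Qed.

Lemma primes_seq1 n p : 0 < n -> primes n = [:: p] -> n = p ^ logn p n.
Proof. by move=> n_gt0 def_n; rewrite {1}(prod_primes_logn n_gt0) def_n big_seq1. Qed.

Lemma dvdn_mul_primes p q d : prime p -> prime q -> d %| p * q ->
  1 < d < p * q -> d = p \/ d = q.
Proof.
move=> p_prime q_prime dvd_d_pq /andP[d_gt1 d_lt].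
have [dvd_pd|ndvd_pd] := boolP (p %| d).
  move: dvd_d_pq d_lt; rewrite -(divnK dvd_pd) mulnC dvdn_pmul2l ?prime_gt0 //.
  case/primeP: q_prime => _ /[apply] /orP[] /eqP ->; first by rewrite muln1; left.
  by rewrite ltnn.
move: dvd_d_pq; rewrite Gauss_dvdr; last by rewrite coprime_sym prime_coprime.
case/primeP: q_prime => _ /[apply] /orP[] /eqP d_eq; last by right.
by rewrite d_eq in d_gt1.
Qed.

Definition squarefree n := forall p, prime p -> ~~ (p ^ 2 %| n).

Lemma squarefree_coprime_divn n d : squarefree n -> d %| n -> coprime d (n %/ d).
Proof.
move=> n_sqf dvd_dn; have n_gt0 : 0 < n by case: n n_sqf {dvd_dn} => // /(_ 2 isT).
have d_gt0 := dvdn_gt0 n_gt0 dvd_dn.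
have e_gt0 : 0 < n %/ d by rewrite divn_gt0 // dvdn_leq.
rewrite coprime_has_primes //; apply/hasP => -[p]; rewrite !mem_primes.
case/and3P=> p_prime _ dvd_pe /and3P[_ _ dvd_pd]; apply/negP: (n_sqf p p_prime).
by rewrite -mulnn -(divnK dvd_dn) dvdn_mul.
Qed.

Definition extremal_exponents n : Prop :=
  [\/ size (primes n) = 1 /\ (forall p, p \in primes n -> 2 < logn p n),
      size (primes n) = 2 /\ (forall p, p \in primes n -> logn p n = 1)
    | 2 <= size (primes n) /\ (exists2 p, p \in primes n & 1 < logn p n)].

Lemma extremal_exponentsE n : 1 < n ->
  extremal_exponents n <->
  (exists p, [/\ prime p, p ^ 2 %| n & p ^ 2 != n]) \/
  (exists p q, [/\ prime p, prime q, p != q & n = p * q]).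
Proof.
move=> n_gt1; have n_gt0 := ltnW n_gt1.
have prime_in p : p \in primes n -> prime p by rewrite mem_primes => /andP[].
split.
  case=> [[k1 lg]|[k2 lg]|[k2 [p p_in lg]]].
  - case def_pr: (primes n) k1 => [|p []] // _.
    have p_in : p \in primes n by rewrite def_pr inE.
    have p_prime := prime_in p p_in; have lg3 := lg p p_in.
    left; exists p; split; rewrite // ?pfactor_dvdn 1?ltnW //.
    by apply: contraTneq lg3 => <-; rewrite pfactorK.
  - case def_pr: (primes n) k2 (primes_uniq n) => [|p [|q []]] // _.
    have [p_in q_in] : p \in primes n /\ q \in primes n by rewrite def_pr !inE !eqxx ?orbT.
    rewrite /= inE andbT => pq; right; exists p, q; split; rewrite ?prime_in //.
    by rewrite {1}(prod_primes_logn n_gt0) def_pr big_cons big_seq1 !lg.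
  - have p_prime := prime_in p p_in.
    left; exists p; split; rewrite // ?pfactor_dvdn //.
    by apply: contraTneq k2 => <-; rewrite primesX // primes_prime.
case=> [[p [p_prime dvd_p2n p2_neqn]]|[p [q [p_prime q_prime pq def_n]]]].
  have lg : 1 < logn p n by rewrite -pfactor_dvdn.
  have p_in : p \in primes n by rewrite -logn_gt0 ltnW.
  have [k2|] := leqP 2 (size (primes n)); first by constructor 3; split=> //; exists p.
  move=> k_lt2; have def_pr : primes n = [:: p].
    by case: (primes n) p_in k_lt2 => [|r []] //; rewrite inE => /eqP ->.
  constructor 1; split=> [|r]; first by rewrite def_pr.
  rewrite def_pr inE => /eqP ->.
  rewrite ltnNge; apply: contra p2_neqn => lg2.
  have lg_eq2 : logn p n = 2 by apply/eqP; rewrite eqn_leq lg2.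
  by rewrite [X in _ == X](primes_seq1 n_gt0 def_pr) lg_eq2.
have mem_pq r : (r \in primes n) = (r \in [:: p; q]).
  by rewrite def_n primesM ?prime_gt0 // !primes_prime // !inE.
have logn_pq r : r \in primes n -> logn r n = 1.
  rewrite mem_pq !inE def_n lognM ?prime_gt0 // !logn_prime //.
  by case/orP=> /eqP ->; rewrite eqxx ?(negPf pq) 1?eq_sym ?(negPf pq).
constructor 2; split=> //.
have /perm_size -> // : perm_eq (primes n) [:: p; q].
by apply: uniq_perm mem_pq; rewrite ?primes_uniq //= inE pq.
Qed.

Lemma factorization_trichotomy n : 1 < n -> ~~ prime n ->
  ~ (exists p, prime p /\ n = p ^ 2) ->
  [\/ exists p, [/\ prime p, p ^ 2 %| n & p ^ 2 != n],
      exists p q, [/\ prime p, prime q, p != q & n = p * q]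
    | squarefree n /\ 3 <= size (primes n)].
Proof.
move=> n_gt1 n_nprime n_nsq; have n_gt0 := ltnW n_gt1.
have prime_in p : p \in primes n -> prime p by rewrite mem_primes => /andP[].
have [/hasP[p p_in lg]|/hasPn lg_le1] := boolP (has (fun p => 1 < logn p n) (primes n)).
  have p_prime := prime_in p p_in.
  constructor 1; exists p; split; rewrite // ?pfactor_dvdn //.
  by apply/eqP => def_n; apply: n_nsq; exists p.
have n_sqf : squarefree n.
  move=> r r_prime; apply/negP => dvd_r2n.
  have r_in : r \in primes n.
    by rewrite mem_primes r_prime n_gt0 (dvdn_trans (@dvdn_exp 2 r r isT (dvdnn r))).
  by move: (lg_le1 r r_in); rewrite /= -pfactor_dvdn ?dvd_r2n.
have def_n : n = \prod_(p <- primes n) p.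
  rewrite {1}(prod_primes_logn n_gt0) big_seq [RHS]big_seq; apply: eq_bigr => p p_in.
  have : 0 < logn p n <= 1 by rewrite logn_gt0 p_in leqNgt lg_le1.
  by case: (logn p n) => [|[]].
case def_pr: (primes n) (primes_uniq n) def_n => [|p [|q [|r s]]] // pr_uniq.
- by rewrite big_nil => n_eq1; rewrite n_eq1 in n_gt1.
- rewrite big_seq1 => n_eq; move: n_nprime; rewrite n_eq prime_in // def_pr inE.
  by rewrite eqxx.
- rewrite big_cons big_seq1 => n_eq; move: pr_uniq; rewrite /= inE andbT => pq.
  have [p_in q_in] : p \in primes n /\ q \in primes n by rewrite def_pr !inE !eqxx ?orbT.
  by constructor 2; exists p, q; rewrite !prime_in.
by constructor 3.
Qed.

End DivisorArithmetic.

(* ['Z_n] is Z/nZ only for n >= 2. *)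
Section IdealsZn.
Variable m : nat.
Local Notation n := m.+2.
Implicit Types I J K : {set 'Z_n}.

Definition divisor_ideal (d : nat) : {set 'Z_n} := [set x : 'Z_n | (d %| x)%N].

Lemma Zn_eq0 (x : 'Z_n) : (n %| x)%N -> x = 0.
Proof. by move=> dvd_nx; apply: val_inj; rewrite /= -(modn_small (ltn_ord x)); apply/eqP. Qed.

Lemma natr_mulZn_eq0 k (x : 'Z_n) : (k%:R * x == 0) = (n %| k * x)%N.
Proof. by rewrite -[x in LHS]natr_Zp -natrM -val_eqE /= val_Zp_nat. Qed.

Lemma mem_divisor_ideal_natr d k : (d %| n)%N ->
  ((k%:R : 'Z_n) \in divisor_ideal d) = (d %| k)%N.
Proof.
by move=> dvd_dn; rewrite inE val_Zp_nat // [in RHS](divn_eq k n) dvdn_addr ?dvdn_mull.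
Qed.

Lemma divisor_ideal_is_ideal d : (d %| n)%N -> is_ideal (divisor_ideal d).
Proof.
move=> dvd_dn; apply/and3P; split; first by rewrite inE dvdn0.
  apply/forallP => x; apply/forallP => y; apply/implyP => /andP[dx dy].
  rewrite !inE in dx dy.
  have -> : x - y = (x + (n - y))%N%:R.
    by rewrite natrD natrB ?(ltnW (ltn_ord y)) // pchar_Zp // sub0r !natr_Zp.
  by rewrite mem_divisor_ideal_natr // dvdn_add // dvdn_sub.
apply/forallP => r; apply/forallP => x; apply/implyP => dx; rewrite inE in dx.
by rewrite -(natr_Zp r) -(natr_Zp x) -natrM mem_divisor_ideal_natr // dvdn_mull.
Qed.

Section Ideal.
Variable I : {set 'Z_n}.
Hypothesis I_ideal : is_ideal I.

Lemma ideal0 : 0 \in I.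
Proof. by case/and3P: I_ideal. Qed.

Lemma idealB x y : x \in I -> y \in I -> x - y \in I.
Proof.
case/and3P: I_ideal => _ /forallP /(_ x) /forallP /(_ y) /implyP closedB _ xI yI.
by apply: closedB; rewrite xI.
Qed.

Lemma idealMl r x : x \in I -> r * x \in I.
Proof. by case/and3P: I_ideal => _ _ /forallP /(_ r) /forallP /(_ x) /implyP. Qed.

Lemma ideal_natr_gcd a b : (a%:R : 'Z_n) \in I -> (b%:R : 'Z_n) \in I ->
  (gcdn a b)%:R \in I.
Proof.
move=> aI bI; have [->|a_gt0] := posnP a; first by rewrite gcd0n.
case: (egcdnP b a_gt0) => km kn def_km _.
have -> : gcdn a b = (km * a - kn * b)%N by rewrite def_km addKn.
rewrite natrB; last by rewrite def_km leq_addr.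
by rewrite !natrM; apply: idealB; apply: idealMl.
Qed.

Lemma ideal_eq_divisor_ideal : exists2 d, (d %| n)%N & I = divisor_ideal d.
Proof.
pose g := gcdn n (\big[gcdn/0%N]_(x in I) (x : nat)).
have gI : (g%:R : 'Z_n) \in I.
  apply: ideal_natr_gcd; first by rewrite pchar_Zp // ideal0.
  apply: (big_ind (fun k => (k%:R : 'Z_n) \in I)) => [|k l|x xI].
  - exact: ideal0.
  - exact: ideal_natr_gcd.
  - by rewrite natr_Zp.
exists g; first exact: dvdn_gcdl.
apply/setP => x; rewrite inE; apply/idP/idP => [xI|dvd_gx].
  by apply: dvdn_trans (dvdn_gcdr _ _) _; apply: (biggcdn_inf x).
by rewrite -(natr_Zp x) -(divnK dvd_gx) natrM idealMl.
Qed.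

End Ideal.

Lemma zero_idealPn (S : {set 'Z_n}) : 0 \in S ->
  reflect (exists2 x, x \in S & x != 0) (S != zero_ideal n).
Proof.
move=> S0; apply: (iffP idP) => [S_neq0|[x xS x_neq0]].
  apply/exists_inP; apply: contraNT S_neq0 => /exists_inPn S_sub0.
  by apply/eqP/setP => x; rewrite inE; apply/idP/eqP => [/S_sub0/negPn/eqP|->].
by apply: contraNneq x_neq0 => S_eq0; move: xS; rewrite S_eq0 inE.
Qed.

Lemma divisor_ideal_inj a b : (a %| n)%N -> (b %| n)%N ->
  divisor_ideal a = divisor_ideal b -> a = b.
Proof.
move=> dvd_an dvd_bn eq_ab; apply/eqP; rewrite eqn_dvd; apply/andP; split.
  by rewrite -(mem_divisor_ideal_natr b dvd_an) eq_ab mem_divisor_ideal_natr.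
by rewrite -(mem_divisor_ideal_natr a dvd_bn) -eq_ab mem_divisor_ideal_natr.
Qed.

Lemma divisor_ideal_n : divisor_ideal n = zero_ideal n.
Proof.
by apply/setP => x; rewrite !inE; apply/idP/eqP => [/Zn_eq0|->]; rewrite ?dvdn0.
Qed.

Lemma divisor_ideal_1 : divisor_ideal 1 = [set: 'Z_n].
Proof. by apply/setP => x; rewrite !inE dvd1n. Qed.

Lemma divisor_ideal_eq0 d : (d %| n)%N ->
  (divisor_ideal d == zero_ideal n) = (d == n).
Proof.
move=> dvd_dn; rewrite -divisor_ideal_n.
by apply/eqP/eqP => [/divisor_ideal_inj -> //|->].
Qed.

Lemma divisor_ideal_eqT d : (d %| n)%N -> (divisor_ideal d == setT) = (d == 1%N).
Proof.
move=> dvd_dn; rewrite -divisor_ideal_1.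
by apply/eqP/eqP => [/divisor_ideal_inj -> //|->].
Qed.

Lemma EIG_verticesP I :
  reflect (exists2 d, [&& d %| n, 1 < d & d < n]%N & I = divisor_ideal d)
          (I \in EIG_vertices n).
Proof.
rewrite inE; apply: (iffP and3P) => [[/ideal_eq_divisor_ideal [d dvd_dn ->]]|].
  rewrite divisor_ideal_eq0 // divisor_ideal_eqT // => d_neqn d_neq1.
  exists d => //; rewrite dvd_dn /=; move: d_neqn d_neq1 (dvdn_leq (ltn0Sn _) dvd_dn).
  by case: d dvd_dn => [|d]; rewrite ?dvd0n //; lia.
case=> d /and3P[dvd_dn d_gt1 d_ltn] ->; split; first exact: divisor_ideal_is_ideal.
  by rewrite divisor_ideal_eq0 // ltn_eqF.
by rewrite divisor_ideal_eqT // gtn_eqF.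
Qed.

Lemma EIG_nvE : EIG_nv n = (size (divisors n) - 2)%N.
Proof.
set s := [seq d <- divisors n | (1 < d < n)%N].
have s_uniq : uniq s := filter_uniq _ (divisors_uniq n).
have -> : EIG_nv n = size (map divisor_ideal s).
  rewrite /EIG_nv -(card_uniqP _); last first.
    rewrite map_inj_in_uniq // => a b; rewrite !mem_filter -!dvdn_divisors //.
    by move=> /andP[_ dvd_an] /andP[_ dvd_bn]; apply: divisor_ideal_inj.
  apply: eq_card => I; apply/EIG_verticesP/mapP => [[d]|[d]].
    move=> /and3P[dvd_dn d_gt1 d_ltn] ->; exists d => //.
    by rewrite mem_filter d_gt1 d_ltn -dvdn_divisors.
  by rewrite mem_filter -dvdn_divisors // => /andP[d_range dvd_dn] ->; exists d; rewrite ?dvd_dn.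
have -> : s = rem 1%N (rem n (divisors n)).
  rewrite [rem n _]rem_filter ?divisors_uniq // rem_filter ?filter_uniq ?divisors_uniq //.
  rewrite -filter_predI /s.
  apply: eq_in_filter => d; rewrite -dvdn_divisors // => dvd_dn /=.
  by move: (dvdn_leq (ltn0Sn _) dvd_dn); case: d dvd_dn => [|d]; rewrite ?dvd0n //; lia.
rewrite size_map size_rem ?size_rem ?divisors_id // ?subn2 //.
by rewrite (mem_rem_uniq _ (divisors_uniq _)) !inE divisor1.
Qed.

Lemma ideal_sumC I K : ideal_sum I K = ideal_sum K I.
Proof.
by apply/setP => z; apply/imset2P/imset2P => -[x y xI yK ->]; exists y x; rewrite 1?addrC.
Qed.

Lemma ideal_sum_subl I K : 0 \in K -> I \subset ideal_sum I K.
Proof. by move=> K0; apply/subsetP => x xI; apply/imset2P; exists x 0; rewrite ?addr0. Qed.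

Lemma ideal_sum_is_ideal I K : is_ideal I -> is_ideal K -> is_ideal (ideal_sum I K).
Proof.
move=> I_ideal K_ideal; apply/and3P; split.
- by apply/imset2P; exists 0 0; rewrite ?addr0 ?ideal0.
- apply/forallP => z1; apply/forallP => z2; apply/implyP.
  case/andP=> /imset2P[x1 y1 x1I y1K ->] /imset2P[x2 y2 x2I y2K ->].
  apply/imset2P; exists (x1 - x2) (y1 - y2); rewrite ?idealB //.
  by rewrite opprD addrACA.
- apply/forallP => r; apply/forallP => z; apply/implyP => /imset2P[x y xI yK ->].
  by apply/imset2P; exists (r * x) (r * y); rewrite ?idealMl // mulrDr.
Qed.

Lemma ideal_sum_divisor_ideal a b : (a %| n)%N -> (b %| n)%N ->
  ideal_sum (divisor_ideal a) (divisor_ideal b) = divisor_ideal (gcdn a b).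
Proof.
move=> dvd_an dvd_bn; have dvd_gn : (gcdn a b %| n)%N := dvdn_trans (dvdn_gcdl a b) dvd_an.
have [Ia Ib] := (divisor_ideal_is_ideal dvd_an, divisor_ideal_is_ideal dvd_bn).
apply/eqP; rewrite eqEsubset; apply/andP; split; apply/subsetP => z.
  case/imset2P=> x y dvd_ax dvd_by ->; rewrite !inE in dvd_ax dvd_by.
  rewrite -(natr_Zp x) -(natr_Zp y) -natrD mem_divisor_ideal_natr //.
  by rewrite dvdn_add // ?(dvdn_trans (dvdn_gcdl a b) dvd_ax) ?(dvdn_trans (dvdn_gcdr a b) dvd_by).
rewrite inE => dvd_gz; rewrite -(natr_Zp z) -(divnK dvd_gz) natrM.
apply/idealMl/ideal_natr_gcd; rewrite ?ideal_sum_is_ideal //.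
  by apply: (subsetP (ideal_sum_subl _ (ideal0 Ib))); rewrite mem_divisor_ideal_natr.
rewrite ideal_sumC; apply: (subsetP (ideal_sum_subl _ (ideal0 Ia))).
by rewrite mem_divisor_ideal_natr.
Qed.

Lemma essential_subset I J : 0 \in I -> I \subset J -> essential I -> essential J.
Proof.
move=> I0 sub_IJ /forallP I_ess; apply/forallP => K; apply/implyP => K_nz.
have K0 : 0 \in K by case/andP: K_nz => /ideal0.
have /zero_idealPn[|x] := implyP (I_ess K) K_nz; first by rewrite inE I0.
rewrite inE => /andP[xI xK] x_neq0.
apply/zero_idealPn; first by rewrite inE (subsetP sub_IJ _ I0).
by exists x; rewrite // inE (subsetP sub_IJ _ xI).
Qed.

Lemma essential_setT : essential [set: 'Z_n].
Proof. by apply/forallP => K; apply/implyP => /andP[_]; rewrite setTI. Qed.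

Lemma essential_divisor_ideal_sq p : prime p -> (p ^ 2 %| n)%N ->
  essential (divisor_ideal p).
Proof.
move=> p_prime dvd_p2n.
have dvd_pn : (p %| n)%N := dvdn_trans (@dvdn_exp 2 p p isT (dvdnn p)) dvd_p2n.
have Ip := divisor_ideal_is_ideal dvd_pn.
apply/forallP => K; apply/implyP => /andP[K_ideal /(zero_idealPn (ideal0 K_ideal))].
case=> x xK x_neq0; apply/zero_idealPn; first by rewrite inE !ideal0.
have [px0|px_neq0] := eqVneq (p%:R * x) 0.
  (* then p^2 | n | p x, so x itself lies in pZ_n *)
  move/eqP: px0; rewrite natr_mulZn_eq0.
  rewrite -mulnn in dvd_p2n; move=> /(dvdn_trans dvd_p2n).
  by rewrite dvdn_pmul2l ?prime_gt0 // => dvd_px; exists x; rewrite // !inE dvd_px.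
exists (p%:R * x) => //; rewrite inE [_ \in K]idealMl // andbT.
by rewrite -(natr_Zp x) -natrM mem_divisor_ideal_natr // dvdn_mulr.
Qed.

Lemma divisor_ideal_not_essential d : (d %| n)%N -> (1 < d)%N ->
  coprime d (n %/ d) -> ~~ essential (divisor_ideal d).
Proof.
move=> dvd_dn d_gt1 d_coprime; apply/forallPn; exists (divisor_ideal (n %/ d)).
have dvd_en : (n %/ d %| n)%N := dvdn_div dvd_dn.
rewrite negb_imply divisor_ideal_is_ideal // divisor_ideal_eq0 // ltn_eqF ?ltn_Pdiv //.
rewrite negbK; apply/eqP/setP => x; rewrite !inE; apply/andP/eqP => [[dx ex]|->].
  apply: Zn_eq0; have : (d * (n %/ d) %| x)%N by rewrite Gauss_dvd // dx ex.
  by rewrite mulnC divnK.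
by rewrite dvdn0.
Qed.

End IdealsZn.


Section EssentialIdealGraph.
Variables (R : rcfType) (m : nat).
Local Notation n := m.+2.
Local Notation V := (EIG_vertices n).
Local Notation nv := (EIG_nv n).

Definition EIG_rel : rel 'I_nv := fun i j => EIG_adj (EIG_vertex i) (EIG_vertex j).

Lemma EIG_rel_sym : symmetric EIG_rel.
Proof. by move=> i j; rewrite /EIG_rel /EIG_adj eq_sym ideal_sumC. Qed.

Lemma EIG_rel_irr : irreflexive EIG_rel.
Proof. by move=> i; rewrite /EIG_rel /EIG_adj eqxx. Qed.

Lemma EIG_vertex_inj : injective (@EIG_vertex n).
Proof. exact: enum_val_inj. Qed.

Lemma EIG_vertexP i : EIG_vertex i \in V.
Proof. exact: enum_valP. Qed.

Lemma EIG_vertexK I (IV : I \in V) : EIG_vertex (enum_rank_in IV I) = I.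
Proof. exact: enum_rankK_in. Qed.

Lemma EIG_laplacianE : EIG_laplacian R n = laplacian R EIG_rel.
Proof.
apply/matrixP => i j; rewrite !mxE; case: eqP => // _; congr (_%:R).
rewrite /EIG_deg /degree -(card_imset _ EIG_vertex_inj); apply: eq_card => K.
rewrite inE; apply/andP/imsetP => [[KV adjK]|[k]]; last first.
  by rewrite inE => adj_ik ->; rewrite EIG_vertexP.
by exists (enum_rank_in KV K); rewrite ?inE /EIG_rel EIG_vertexK.
Qed.

Lemma b_EIG_le : b_EIG R n <= nv%:R.
Proof.
rewrite /b_EIG EIG_laplacianE; apply: largest_eigenvalue_le => //.
exact: laplacian_eigenvalue_le EIG_rel_sym EIG_rel_irr.
Qed.

Lemma b_EIG_universal u : u \in V ->
  (forall K, K \in V -> K != u -> essential (ideal_sum u K)) -> (1 < nv)%N ->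
  b_EIG R n = nv%:R.
Proof.
move=> uV u_univ nv_gt1; apply/eqP; rewrite eq_le b_EIG_le /b_EIG EIG_laplacianE.
apply: largest_eigenvalue_ge.
apply: (laplacian_eigenvalue_universal R EIG_rel_sym EIG_rel_irr (u := enum_rank_in uV u)) => // j.
rewrite -(inj_eq EIG_vertex_inj) EIG_vertexK => j_neq_u.
by rewrite /EIG_rel /EIG_adj EIG_vertexK eq_sym j_neq_u u_univ // EIG_vertexP.
Qed.

Lemma compl_EIG_rel i j : compl_rel EIG_rel i j =
  (EIG_vertex i != EIG_vertex j) && ~~ essential (ideal_sum (EIG_vertex i) (EIG_vertex j)).
Proof.
rewrite /compl_rel /EIG_rel /EIG_adj (inj_eq EIG_vertex_inj).
by case: eqP.
Qed.

Lemma b_EIG_neq_nv (nv_gt0 : (0 < nv)%N) :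
  (forall I K, I \in V -> K \in V -> I != K -> ~~ essential (ideal_sum I K) \/
     exists2 W, W \in V & [&& W != I, W != K, ~~ essential (ideal_sum I W) &
                              ~~ essential (ideal_sum W K)]) ->
  b_EIG R n != nv%:R.
Proof.
move=> diam2; rewrite /b_EIG EIG_laplacianE; apply/negP => /eqP b_eq.
have := @largest_eigenvalue_eigen _ _ (laplacian R EIG_rel).
rewrite b_eq pnatr_eq0 -lt0n nv_gt0 => /(_ isT); apply/negP.
apply: laplacian_not_eigenvalue_N EIG_rel_sym EIG_rel_irr nv_gt0 _ => i j ij.
rewrite -(inj_eq EIG_vertex_inj) in ij.
case: (diam2 _ _ (EIG_vertexP i) (EIG_vertexP j) ij) => [nIJ|[W WV /and4P[WI WK nIW nWK]]].
  by left; rewrite compl_EIG_rel ij.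
right; exists (enum_rank_in WV W); rewrite compl_EIG_rel EIG_vertexK.
  by rewrite eq_sym WI.
by rewrite WK.
Qed.

End EssentialIdealGraph.

Section ExtremalCases.
Variables (R : rcfType) (m : nat).
Local Notation n := m.+2.
Local Notation V := (EIG_vertices n).
Local Notation nv := (EIG_nv n).

Lemma divisor_ideal_vertex d : (d %| n)%N -> (1 < d)%N -> (d < n)%N ->
  divisor_ideal m d \in V.
Proof. by move=> dvd_dn d_gt1 d_lt; apply/EIG_verticesP; exists d; rewrite ?dvd_dn ?d_gt1. Qed.

Lemma EIG_nv_gt1 a b : (a %| n)%N -> (b %| n)%N -> (1 < a < n)%N -> (1 < b < n)%N ->
  a != b -> (1 < nv)%N.
Proof.
move=> dvd_an dvd_bn /andP[a_gt1 a_lt] /andP[b_gt1 b_lt] ab.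
apply/card_gt1P; exists (divisor_ideal m a), (divisor_ideal m b).
rewrite !divisor_ideal_vertex //; split=> //.
by apply: contra ab => /eqP /divisor_ideal_inj -> //.
Qed.

Lemma b_EIG_square_factor p : prime p -> (p ^ 2 %| n)%N -> (p ^ 2 != n)%N ->
  b_EIG R n = nv%:R.
Proof.
move=> p_prime dvd_p2n p2_neqn; have p_gt1 := prime_gt1 p_prime.
have dvd_pn : (p %| n)%N := dvdn_trans (@dvdn_exp 2 p p isT (dvdnn p)) dvd_p2n.
have p_lt_p2 : (p < p ^ 2)%N by rewrite -mulnn ltn_Pmull // ltnW.
have p2_lt : (p ^ 2 < n)%N by rewrite ltn_neqAle p2_neqn dvdn_leq.
apply: (b_EIG_universal R (u := divisor_ideal m p)) => [|K KV _|].
- by rewrite divisor_ideal_vertex // (ltn_trans p_lt_p2).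
- apply: essential_subset (essential_divisor_ideal_sq p_prime dvd_p2n).
    by rewrite inE dvdn0.
  by move: KV; rewrite inE => /and3P[K_ideal _ _]; apply/ideal_sum_subl/ideal0.
apply: (EIG_nv_gt1 dvd_pn dvd_p2n); rewrite ?p_gt1 ?(ltn_trans p_gt1 p_lt_p2) //=.
- exact: ltn_trans p2_lt.
- by rewrite ltn_eqF.
Qed.

Lemma b_EIG_semiprime p q : prime p -> prime q -> p != q -> n = (p * q)%N ->
  b_EIG R n = nv%:R.
Proof.
move=> p_prime q_prime pq def_n.
have [p_gt1 q_gt1] := (prime_gt1 p_prime, prime_gt1 q_prime).
have dvd_pn : (p %| n)%N by rewrite def_n dvdn_mulr.
have dvd_qn : (q %| n)%N by rewrite def_n dvdn_mull.
have p_lt : (p < n)%N by rewrite def_n ltn_Pmulr // ltnW.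
have q_lt : (q < n)%N by rewrite def_n ltn_Pmull // ltnW.
apply: (b_EIG_universal R (u := divisor_ideal m p)) => [|K /EIG_verticesP[d]|].
- exact: divisor_ideal_vertex.
- move=> /and3P[dvd_dn d_gt1 d_lt] -> d_neq_p.
  have [d_eq|->] : d = p \/ d = q by apply: dvdn_mul_primes; rewrite -?def_n ?d_gt1.
    by rewrite d_eq eqxx in d_neq_p.
  have pq_coprime : coprime p q by rewrite prime_coprime // dvdn_prime2.
  rewrite ideal_sum_divisor_ideal // (eqP pq_coprime) divisor_ideal_1.
  exact: essential_setT.
by apply: (EIG_nv_gt1 dvd_pn dvd_qn); rewrite ?p_gt1 ?q_gt1.
Qed.

Lemma not_essential_common_prime r a b : squarefree n -> prime r ->
  (r %| a)%N -> (r %| b)%N -> (a %| n)%N -> (b %| n)%N ->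
  ~~ essential (ideal_sum (divisor_ideal m a) (divisor_ideal m b)).
Proof.
move=> n_sqf r_prime dvd_ra dvd_rb dvd_an dvd_bn.
have dvd_gn : (gcdn a b %| n)%N := dvdn_trans (dvdn_gcdl a b) dvd_an.
rewrite ideal_sum_divisor_ideal //; apply: divisor_ideal_not_essential => //.
  have g_gt0 : (0 < gcdn a b)%N by rewrite gcdn_gt0 (dvdn_gt0 _ dvd_an).
  have dvd_rg : (r %| gcdn a b)%N by rewrite dvdn_gcd dvd_ra dvd_rb.
  exact: leq_trans (prime_gt1 r_prime) (dvdn_leq g_gt0 dvd_rg).
exact: squarefree_coprime_divn.
Qed.

Lemma squarefree_common_non_neighbour a b :
  squarefree n -> (3 <= size (primes n))%N ->
  (a %| n)%N -> (b %| n)%N -> (1 < a)%N -> (1 < b)%N -> coprime a b ->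
  exists2 W, W \in V &
    [&& W != divisor_ideal m a, W != divisor_ideal m b,
        ~~ essential (ideal_sum (divisor_ideal m a) W) &
        ~~ essential (ideal_sum W (divisor_ideal m b))].
Proof.
move=> n_sqf k_ge3 dvd_an dvd_bn a_gt1 b_gt1 ab_coprime.
have no_common r : prime r -> (r %| a)%N -> (r %| b)%N -> False.
  move=> r_prime dvd_ra dvd_rb; have : (r %| gcdn a b)%N by rewrite dvdn_gcd dvd_ra dvd_rb.
  by rewrite (eqP ab_coprime) dvdn1 => /eqP r_eq1; rewrite r_eq1 in r_prime.
set p := pdiv a; set q := pdiv b.
have [p_prime q_prime] := (pdiv_prime a_gt1, pdiv_prime b_gt1).
have [dvd_pa dvd_qb] : (p %| a)%N /\ (q %| b)%N by split; apply: pdiv_dvd.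
have [dvd_pn dvd_qn] := (dvdn_trans dvd_pa dvd_an, dvdn_trans dvd_qb dvd_bn).
have pq : p != q by apply/eqP => p_eq_q; apply: (no_common p) => //; rewrite p_eq_q.
have [r r_in /andP[r_neq_p r_neq_q]] : exists2 r, r \in primes n & (r != p) && (r != q).
  apply/hasP; apply: contraTT k_ge3 => /hasPn r_pq; rewrite -ltnNge ltnS.
  apply: (@uniq_leq_size _ _ [:: p; q] (primes_uniq n)) => r /r_pq.
  by rewrite !inE negb_and !negbK.
move: r_in; rewrite mem_primes => /and3P[r_prime _ dvd_rn].
have pq_coprime : coprime p q by rewrite prime_coprime // dvdn_prime2.
have dvd_pqn : (p * q %| n)%N by rewrite Gauss_dvd // dvd_pn dvd_qn.
have pq_gt1 : (1 < p * q)%N.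
  by rewrite (leq_trans (prime_gt1 p_prime)) // leq_pmulr // prime_gt0.
have pq_lt : (p * q < n)%N.
  rewrite ltn_neqAle dvdn_leq // andbT; apply: contraTneq dvd_rn => <-.
  by rewrite Euclid_dvdM // !dvdn_prime2 // (negPf r_neq_p) (negPf r_neq_q).
exists (divisor_ideal m (p * q)); first exact: divisor_ideal_vertex.
apply/and4P; split.
- apply/eqP => /(divisor_ideal_inj dvd_pqn dvd_an) pq_eq.
  by apply: (no_common q) => //; rewrite -pq_eq dvdn_mull.
- apply/eqP => /(divisor_ideal_inj dvd_pqn dvd_bn) pq_eq.
  by apply: (no_common p) => //; rewrite -pq_eq dvdn_mulr.
- by apply: (not_essential_common_prime n_sqf p_prime) => //; rewrite dvdn_mulr.
by apply: (not_essential_common_prime n_sqf q_prime) => //; rewrite dvdn_mull.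
Qed.

Lemma b_EIG_squarefree : squarefree n -> (3 <= size (primes n))%N ->
  b_EIG R n != nv%:R.
Proof.
move=> n_sqf k_ge3; apply: b_EIG_neq_nv.
  case def_pr: (primes n) (k_ge3) => [|p s] // _.
  have: p \in primes n by rewrite def_pr mem_head.
  rewrite mem_primes => /and3P[p_prime _ dvd_pn].
  apply/card_gt0P; exists (divisor_ideal m p); apply: divisor_ideal_vertex => //.
    exact: prime_gt1.
  rewrite ltn_neqAle dvdn_leq // andbT; apply: contraTneq k_ge3 => <-.
  by rewrite primes_prime.
move=> I K /EIG_verticesP[a /and3P[dvd_an a_gt1 _] ->].
move=> /EIG_verticesP[b /and3P[dvd_bn b_gt1 _] ->] _.
have [ab_coprime|ab_ncoprime] := boolP (coprime a b).
  by right; apply: squarefree_common_non_neighbour.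
have g_gt1 : (1 < gcdn a b)%N.
  by rewrite ltn_neqAle eq_sym ab_ncoprime gcdn_gt0 (dvdn_gt0 _ dvd_an).
have dvd_rg := pdiv_dvd (gcdn a b).
left; apply: (not_essential_common_prime n_sqf (pdiv_prime g_gt1)) => //.
  exact: dvdn_trans dvd_rg (dvdn_gcdl a b).
exact: dvdn_trans dvd_rg (dvdn_gcdr a b).
Qed.

End ExtremalCases.

Theorem mainTheorem15 (R : rcfType) (n : nat) :
  (1 < n)%N -> ~~ prime n -> ~ (exists p, prime p /\ n = (p ^ 2)%N) ->
  let k := size (primes n) in
  let T : R := (\prod_(p <- primes n) (logn p n).+1)%N%:R - 2 in
  b_EIG R n <= T /\
  (b_EIG R n = T <->
     [\/ k = 1%N /\ (forall p, p \in primes n -> (2 < logn p n)%N),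
         k = 2%N /\ (forall p, p \in primes n -> logn p n = 1%N)
       | (2 <= k)%N /\ (exists2 p, p \in primes n & (1 < logn p n)%N)]).
Proof.
case: n => [|[|m]] // n_gt1 n_nprime n_nsq k T.
have -> : T = (EIG_nv m.+2)%:R.
  by rewrite /T EIG_nvE -size_divisors natrB ?size_divisors_ge2.
split; first exact: b_EIG_le.
split=> [b_eq|/(extremal_exponentsE n_gt1)].
  apply/(extremal_exponentsE n_gt1).
  case: (factorization_trichotomy n_gt1 n_nprime n_nsq) => [||[n_sqf k_ge3]]; auto.
  by move: (b_EIG_squarefree R n_sqf k_ge3); rewrite b_eq eqxx.
case=> [[p [p_prime dvd_p2n p2_neqn]]|[p [q [p_prime q_prime pq def_n]]]].
  exact: (b_EIG_square_factor R p_prime dvd_p2n p2_neqn).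
exact: (b_EIG_semiprime R p_prime q_prime pq def_n).
Qed.
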